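(* Let $\boldsymbol A,\boldsymbol B$ be $m\times l$ matrices with $\boldsymbol A^\top\boldsymbol A=\boldsymbol B^\top\boldsymbol B=\boldsymbol I_l$, and let $\boldsymbol M$ be an $l\times l$ positive definite matrix whose eigenvalues lie in $[\lambda,\kappa\lambda]$ for some $\lambda>0$, $\kappa\ge1$. If $\boldsymbol A^\top\boldsymbol B$ is a diagonal matrix with non-negative entries, then there is a constant $C$ depending only on $\kappa$ such that $$\|\boldsymbol A\boldsymbol M\boldsymbol A^\top-\boldsymbol B\boldsymbol M\boldsymbol B^\top\|_F\le C\lambda\|\boldsymbol A\boldsymbol A^\top-\boldsymbol B\boldsymbol B^\top\|_F .$$ *)

From HB Require Import structures.
From mathcomp Require Import all_boot all_order all_algebra.
From mathcomp Require Import reals.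
Set Implicit Arguments. Unset Strict Implicit. Unset Printing Implicit Defensive.
Import Order.TTheory GRing.Theory Num.Theory.
Local Open Scope ring_scope.

Definition frob (R : realType) (m n : nat) (X : 'M[R]_(m, n)) : R :=
  Num.sqrt (\sum_(i < m) \sum_(j < n) X i j ^+ 2).

Definition posdef (R : realType) (n : nat) (M : 'M[R]_n) : Prop :=
  M^T = M /\ forall x : 'cV[R]_n, x != 0 -> 0 < (x^T *m M *m x) 0 0.

(* The proof reduces everything to the "diagonal picture" given by
   D = A^T B = diag(d), whose entries lie in [0, 1].

   For any symmetric l x l matrix N and any m x l matrices U, V with
   orthonormal columns and U^T V = diag(d), expanding the square and using
   tr(XY) = tr(YX) gives the exact identity
       ||U N U^T - V N V^T||_F^2 = 2 sum_(i,j) N_ij^2 (1 - d_i d_j).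
   With N = I this reads ||A A^T - B B^T||_F^2 = 2 sum_i (1 - d_i^2).
   Since 1 - d_i d_j <= (1 - d_i^2) + (1 - d_j^2) on [0, 1], the case N = M
   is bounded by 4 mu sum_i (1 - d_i^2), where mu bounds every row sum of
   squares sum_j M_ij^2; the spectral theorem (over the complexification)
   gives mu = (kappa lam)^2.  Comparing the two identities yields the claim
   with C = 2 kappa. *)
From HB Require Import structures.
From mathcomp Require Import all_boot all_order all_algebra.
From mathcomp Require Import reals complex ring lra.
Set Implicit Arguments. Unset Strict Implicit. Unset Printing Implicit Defensive.
Import Order.TTheory GRing.Theory Num.Theory.
Local Open Scope ring_scope.

(* Rows of a symmetric real matrix are controlled by its spectrum: the sum
   of squares of a row is a diagonal entry of M^2, a convex combination of
   the squared eigenvalues. *)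
Section SymmetricRowBound.
Local Open Scope sesquilinear_scope.
Local Open Scope complex_scope.
Variables (R : rcfType) (l : nat) (M : 'M[R]_l).
Hypothesis Msym : M^T = M.

Let Mc : 'M[R[i]]_l := map_mx (real_complex R) M.
Let P := spectralmx Mc.
Let d := spectral_diag Mc.

Lemma complexified_hermitian : Mc \is hermsymmx.
Proof.
apply: realsym_hermsym.
  by apply/is_hermitianmxP; rewrite expr0 scale1r map_mx_id // /Mc map_trmx Msym.
by apply/mxOverP => j k; rewrite mxE; apply/complex_realP; exists (M j k).
Qed.

Lemma complexified_spectral :
  [/\ P *m P^t* = 1%:M, P^t* *m P = 1%:M & Mc = P^t* *m diag_mx d *m P].
Proof.
have Pu : P \is unitarymx by apply: spectral_unitarymx.
have PPt : P *m P^t* = 1%:M by apply/unitarymxP.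
split=> //; first exact: mulmx1C.
have /orthomx_spectralP := hermitian_normalmx complexified_hermitian.
by rewrite invmx_unitary.
Qed.

Lemma spectral_diag_eigenvalue k :
  exists2 r : R, d 0 k = r%:C & eigenvalue M r.
Proof.
have [PPt _ Mdec] := complexified_spectral.
have /complex_realP [r dr] : d 0 k \is Num.real.
  exact: (mxOverP (hermitian_spectral_diag_real complexified_hermitian)).
exists r => //.
have PMc : P *m Mc = diag_mx d *m P by rewrite {1}Mdec !mulmxA PPt mul1mx.
have ev : eigenvalue Mc (d 0 k).
  apply/eigenvalueP; exists (row k P).
    by rewrite -row_mul PMc mul_diag_mx; apply/rowP => j; rewrite !mxE.
  apply/eqP => rk0; have := congr1 (fun v => (v *m P^t*) 0 k) rk0.
  by rewrite -row_mul PPt mul0mx !mxE eqxx /= => /eqP; rewrite oner_eq0.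
move: ev; rewrite dr !eigenvalue_root_char.
by rewrite -(fmorph_root (real_complex R)) map_char_poly.
Qed.

Lemma row_sumsq_le_eigen_sqr (mu : R) :
  (forall a, eigenvalue M a -> a ^+ 2 <= mu) ->
  forall i, \sum_j M i j ^+ 2 <= mu.
Proof.
move=> Heig i; have [PPt PtP Mdec] := complexified_spectral.
have M2ii : (M *m M) i i = \sum_j M i j ^+ 2.
  by rewrite mxE; apply: eq_bigr => j _; rewrite -{2}Msym mxE expr2.
have M2c : ((M *m M) i i)%:C = \sum_k (P^t* i k * P k i) * (d 0 k * d 0 k).
  have -> : ((M *m M) i i)%:C = (Mc *m Mc) i i by rewrite /Mc -map_mxM [RHS]mxE.
  rewrite Mdec !mulmxA -(mulmxA (P^t* *m diag_mx d) P) PPt mulmx1.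
  rewrite !mul_mx_diag mxE; apply: eq_bigr => k _; rewrite !mxE.
  by rewrite -!mulrA; congr (_ * _); rewrite mulrA mulrC.
have weights1 : \sum_k (P^t* i k * P k i) = 1.
  by have := congr1 (fun X : 'M[R[i]]_l => X i i) PtP; rewrite !mxE eqxx.
rewrite -M2ii -(lecR (R:=R)) M2c -[mu%:C]mul1r -weights1 mulr_suml.
apply: ler_sum => k _; apply: ler_wpM2l.
  by rewrite !mxE mulrC; apply: mul_conjC_ge0.
have [r dr /Heig] := spectral_diag_eigenvalue k.
by rewrite dr -rmorphM /= -expr2 lecR.
Qed.

End SymmetricRowBound.

Definition sumsq {R : pzRingType} {m n : nat} (X : 'M[R]_(m, n)) : R :=
  \sum_(i < m) \sum_(j < n) X i j ^+ 2.

Lemma sumsq_trace (R : comPzRingType) (n : nat) (X : 'M[R]_n) :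
  sumsq X = \tr (X *m X^T).
Proof.
rewrite /mxtrace; apply: eq_bigr => i _; rewrite mxE; apply: eq_bigr => j _.
by rewrite mxE expr2.
Qed.

Lemma frob_le_scale (R : realType) (m n p q : nat) (X : 'M[R]_(m, n))
    (Y : 'M[R]_(p, q)) (c : R) :
  0 <= c -> sumsq X <= c ^+ 2 * sumsq Y -> frob X <= c * frob Y.
Proof.
move=> c0 hXY; have Y0 : 0 <= sumsq Y by do 2!apply: sumr_ge0 => ? _; exact: sqr_ge0.
rewrite /frob -/(sumsq X) -/(sumsq Y) -(ger0_norm c0) -sqrtr_sqr -sqrtrM ?sqr_ge0 //.
by rewrite ler_sqrt // mulr_ge0 ?sqr_ge0.
Qed.

Lemma sumsq_conj_diff (R : comPzRingType) (m l : nat) (U V : 'M[R]_(m, l))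
    (N : 'M[R]_l) (dv : 'rV[R]_l) :
  U^T *m U = 1%:M -> V^T *m V = 1%:M -> U^T *m V = diag_mx dv -> N^T = N ->
  sumsq (U *m N *m U^T - V *m N *m V^T)
  = 2 * \sum_i \sum_j N i j ^+ 2 * (1 - dv 0 i * dv 0 j).
Proof.
move=> hU hV hD hN.
have hD' : V^T *m U = diag_mx dv.
  by rewrite -[U]trmxK -trmx_mul hD tr_diag_mx.
have conj_sym (P : 'M[R]_(m, l)) : (P *m N *m P^T)^T = P *m N *m P^T.
  by rewrite !trmx_mul trmxK hN mulmxA.
have tr_cross (P Q : 'M[R]_(m, l)) : \tr (P *m N *m P^T *m (Q *m N *m Q^T))
   = \tr (N *m (P^T *m Q) *m N *m (Q^T *m P)).
  by rewrite -!mulmxA mxtrace_mulC !mulmxA.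
have trNN : \tr (N *m N) = \sum_i \sum_j N i j ^+ 2.
  rewrite /mxtrace; apply: eq_bigr => i _; rewrite mxE; apply: eq_bigr => j _.
  by rewrite -{2}hN mxE expr2.
have trNDND : \tr (N *m diag_mx dv *m N *m diag_mx dv)
   = \sum_i \sum_j N i j ^+ 2 * (dv 0 i * dv 0 j).
  rewrite /mxtrace; apply: eq_bigr => i _; rewrite mul_mx_diag !mxE mulr_suml.
  by apply: eq_bigr => j _; rewrite mul_mx_diag mxE -{2}hN mxE; ring.
rewrite sumsq_trace linearB /= !conj_sym mulmxBl !mulmxBr !raddfB /= !tr_cross.
rewrite hU hV hD hD' !mulmx1 trNN trNDND.
have -> : \sum_i \sum_j N i j ^+ 2 * (1 - dv 0 i * dv 0 j)
    = \sum_i \sum_j N i j ^+ 2 - \sum_i \sum_j N i j ^+ 2 * (dv 0 i * dv 0 j).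
  rewrite -sumrB; apply: eq_bigr => i _; rewrite -sumrB.
  by apply: eq_bigr => j _; rewrite mulrBr mulr1.
ring.
Qed.

Lemma sumsq_proj_diff (R : comPzRingType) (m l : nat) (U V : 'M[R]_(m, l))
    (dv : 'rV[R]_l) :
  U^T *m U = 1%:M -> V^T *m V = 1%:M -> U^T *m V = diag_mx dv ->
  sumsq (U *m U^T - V *m V^T) = 2 * \sum_i (1 - dv 0 i ^+ 2).
Proof.
move=> hU hV hD; have := sumsq_conj_diff hU hV hD (trmx1 _ _).
rewrite !mulmx1 => ->; congr (_ * _); apply: eq_bigr => i _.
rewrite (bigD1 i) //= big1 ?addr0 => [|j /negPf ij].
  by rewrite mxE eqxx expr1n mul1r expr2.
by rewrite mxE eq_sym ij expr0n mul0r.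
Qed.

(* The diagonal of U^T V is bounded by 1: 2 <u_i, v_i> <= |u_i|^2 + |v_i|^2. *)
Lemma cross_diag_le1 (R : realFieldType) (m l : nat) (U V : 'M[R]_(m, l)) i :
  U^T *m U = 1%:M -> V^T *m V = 1%:M -> (U^T *m V) i i <= 1.
Proof.
move=> hU hV.
have col_sumsq (W : 'M[R]_(m, l)) : W^T *m W = 1%:M -> \sum_k W k i ^+ 2 = 1.
  move=> hW; have := congr1 (fun X : 'M[R]_l => X i i) hW.
  rewrite !mxE eqxx mulr1n => <-.
  by apply: eq_bigr => k _; rewrite mxE expr2.
have dist0 : 0 <= \sum_k (U k i - V k i) ^+ 2 by apply: sumr_ge0 => k _; exact: sqr_ge0.
have expand : \sum_k (U k i - V k i) ^+ 2
    = \sum_k U k i ^+ 2 + \sum_k V k i ^+ 2 - 2 * (U^T *m V) i i.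
  rewrite mxE mulr_sumr -big_split -sumrB; apply: eq_bigr => k _ /=.
  by rewrite mxE; ring.
by move: dist0; rewrite expand !col_sumsq //; lra.
Qed.

Lemma one_sub_mul_le (R : realFieldType) (a b : R) :
  0 <= a <= 1 -> 0 <= b <= 1 -> 1 - a * b <= (1 - a ^+ 2) + (1 - b ^+ 2).
Proof. by move=> /andP[a0 a1] /andP[b0 b1]; case: (lerP a b) => ?; nra. Qed.

Lemma weighted_sumsq_le (R : realFieldType) (l : nat) (N : 'M[R]_l)
    (dv : 'rV[R]_l) (mu : R) :
  N^T = N -> (forall i, 0 <= dv 0 i <= 1) -> (forall i, \sum_j N i j ^+ 2 <= mu) ->
  \sum_i \sum_j N i j ^+ 2 * (1 - dv 0 i * dv 0 j)
   <= 2 * mu * \sum_i (1 - dv 0 i ^+ 2).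
Proof.
move=> hN hd hrow; pose e i := 1 - dv 0 i ^+ 2.
have e0 i : 0 <= e i by have /andP[? ?] := hd i; rewrite /e; nra.
have rowterm i : \sum_j N i j ^+ 2 * e i <= mu * e i.
  by rewrite -mulr_suml ler_wpM2r.
apply: le_trans (_ : \sum_i \sum_j N i j ^+ 2 * (e i + e j) <= _).
  do 2!apply: ler_sum => ? _; apply: ler_wpM2l; [exact: sqr_ge0|exact: one_sub_mul_le].
(* By symmetry of N, both halves of the split sum agree. *)
have sym_half : \sum_i \sum_j N i j ^+ 2 * e j = \sum_i \sum_j N i j ^+ 2 * e i.
  by rewrite exchange_big; apply: eq_bigr => i _; apply: eq_bigr => j _; rewrite -{1}hN mxE.
have -> : \sum_i \sum_j N i j ^+ 2 * (e i + e j)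
    = 2 * \sum_i \sum_j N i j ^+ 2 * e i.
  rewrite mulr2n mulrDl mul1r -{2}sym_half -big_split /=.
  by apply: eq_bigr => i _; rewrite -big_split; apply: eq_bigr => j _; rewrite mulrDr.
rewrite -mulrA ler_pM2l // mulr_sumr; apply: ler_sum => i _; exact: rowterm.
Qed.

Theorem mainTheorem18 (R : realType) (kappa : R) (hkappa : 1 <= kappa) :
  exists C : R,
    forall (m l : nat) (A B : 'M[R]_(m, l)) (M : 'M[R]_l) (lam : R),
      0 < lam ->
      A^T *m A = 1%:M ->
      B^T *m B = 1%:M ->
      posdef M ->
      (forall a : R, eigenvalue M a -> lam <= a <= kappa * lam) ->
      is_diag_mx (A^T *m B) ->
      (forall i : 'I_l, 0 <= (A^T *m B) i i) ->
      frob (A *m M *m A^T - B *m M *m B^T)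
        <= C * lam * frob (A *m A^T - B *m B^T).
Proof.
exists (2 * kappa) => m l A B M lam lam0 hA hB [Msym _] heig hdiag hnn.
have [dv hD] := diag_mxP _ hdiag.
have dv_unit i : 0 <= dv 0 i <= 1.
  have -> : dv 0 i = (A^T *m B) i i by rewrite hD mxE eqxx mulr1n.
  by rewrite hnn cross_diag_le1.
have row_bound : forall i, \sum_j M i j ^+ 2 <= (kappa * lam) ^+ 2.
  apply: row_sumsq_le_eigen_sqr => // a /heig /andP[lam_a a_klam].
  have a0 : 0 <= a by apply: le_trans (ltW lam0) lam_a.
  by rewrite ler_sqr ?nnegrE // (le_trans a0).
have e0 : 0 <= \sum_i (1 - dv 0 i ^+ 2).
  by apply: sumr_ge0 => i _; have /andP[? ?] := dv_unit i; nra.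
apply: frob_le_scale; first by rewrite !mulr_ge0 ?ltW //; lra.
rewrite (sumsq_conj_diff hA hB hD Msym) (sumsq_proj_diff hA hB hD).
have := weighted_sumsq_le Msym dv_unit row_bound; rewrite -mulrA.
have : 0 <= (kappa * lam) ^+ 2 * \sum_i (1 - dv 0 i ^+ 2) by rewrite mulr_ge0 ?sqr_ge0.
have -> : (2 * kappa * lam) ^+ 2 * (2 * \sum_i (1 - dv 0 i ^+ 2))
    = 8 * ((kappa * lam) ^+ 2 * \sum_i (1 - dv 0 i ^+ 2)) by ring.
lra.
Qed.
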